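(* Let $X$ be an uncountable set and let $\ell_\infty(X)$ be the space of all bounded functions $f:X\to\mathbb{R}$. Then there exists no reproducing kernel Hilbert space $H$ of functions on $X$ such that $\ell_\infty(X)\subset H$.
   Context: A reproducing kernel Hilbert space (RKHS) on a set $X$ is a Hilbert space $H$ consisting of real-valued functions $f:X\to\mathbb{R}$ (with the pointwise vector space operations) such that for every $x\in X$ the point evaluation $f\mapsto f(x)$ is a continuous linear functional on $H$; equivalently, $H$ has a reproducing kernel $k:X\times X\to\mathbb{R}$ with $k(\cdot,x)\in H$ and $f(x)=\langle f,k(\cdot,x)\rangle_H$ for all $f\in H$, $x\in X$. The inclusion $\ell_\infty(X)\subset H$ is meant as sets of functions on $X$. *)

From Stdlib Require Import Reals.
Open Scope R_scope.

Definition bounded_fun {X : Type} (f : X -> R) : Prop :=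
  exists M : R, forall x, Rabs (f x) <= M.

Definition countable_type (X : Type) : Prop :=
  exists c : X -> nat, forall x y, c x = c y -> x = y.

Definition ip_norm {X : Type} (ip : (X -> R) -> (X -> R) -> R) (f : X -> R) : R :=
  sqrt (ip f f).

Definition fsub {X : Type} (f g : X -> R) : X -> R := fun x => f x - g x.

(* H (a set of functions X -> R, with pointwise vector operations) together
   with ip is a real Hilbert space whose point evaluations are continuous,
   i.e. a reproducing kernel Hilbert space on X. *)
Record is_RKHS (X : Type) (H : (X -> R) -> Prop)
    (ip : (X -> R) -> (X -> R) -> R) : Prop := {
  rkhs_zero : H (fun _ => 0);
  rkhs_add : forall f g, H f -> H g -> H (fun x => f x + g x);
  rkhs_scal : forall (a : R) f, H f -> H (fun x => a * f x);
  rkhs_ip_sym : forall f g, H f -> H g -> ip f g = ip g f;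
  rkhs_ip_add : forall f g h, H f -> H g -> H h ->
      ip (fun x => f x + g x) h = ip f h + ip g h;
  rkhs_ip_scal : forall (a : R) f g, H f -> H g ->
      ip (fun x => a * f x) g = a * ip f g;
  rkhs_ip_pos : forall f, H f -> 0 <= ip f f;
  rkhs_ip_def : forall f, H f -> ip f f = 0 -> f = (fun _ => 0);
  rkhs_complete : forall u : nat -> X -> R, (forall n, H (u n)) ->
      (forall eps, 0 < eps -> exists N, forall n m, (N <= n)%nat -> (N <= m)%nat ->
          ip_norm ip (fsub (u n) (u m)) < eps) ->
      exists f, H f /\
        (forall eps, 0 < eps -> exists N, forall n, (N <= n)%nat ->
          ip_norm ip (fsub (u n) f) < eps);
  rkhs_eval_cont : forall x f, H f -> forall eps, 0 < eps ->
      exists delta, 0 < delta /\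
        forall g, H g -> ip_norm ip (fsub g f) < delta -> Rabs (g x - f x) < eps
}.

(** Each evaluation functional is represented by a kernel function [k_x]: a rescaled
    minimal-norm element of the closed hyperplane [{g | g x = 1}].  If [X] is uncountable,
    the sets [{x | ||k_x||^2 <= m}] cannot all be finite, so infinitely many points
    [x_0, x_1, ...] satisfy [||k_(x_i)||^2 <= M] for one [M].  Choosing each sign [e_i] so that
    [e_i k_(x_i)] makes a non-acute angle with [S_i = sum_(j<i) e_j k_(x_j)] keeps
    [||S_n||^2 <= n M].  The bounded function equal to [e_i] at [x_i] and to [0] elsewhere has
    [<f, S_n> = n], and Cauchy-Schwarz gives [n^2 <= n M ||f||^2] for every [n]: absurd. *)

From Stdlib Require Import Reals Lra Lia List Classical ClassicalEpsilon
  FunctionalExtensionality Cantor.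
Open Scope R_scope.

Lemma finite_or_injective_seq {X : Type} (A : X -> Prop) :
  (exists l : list X, forall x, A x -> In x l) \/
  (exists s : nat -> X, (forall i j, s i = s j -> i = j) /\ forall n, A (s n)).
Proof.
  destruct (classic (exists l : list X, forall x, A x -> In x l)) as [hfin | hinf];
    [left; exact hfin | right].
  assert (hnew : forall l : list X, exists x, A x /\ ~ In x l).
  { intro l. apply NNPP. intro hno. apply hinf. exists l. intros x hx.
    apply NNPP. intro hx'. apply hno. exists x. split; assumption. }
  destruct (choice _ hnew) as [next hnext].
  set (prefix := fix prefix (n : nat) : list X :=
         match n with O => nil | S n' => next (prefix n') :: prefix n' end).
  exists (fun n => next (prefix n)). split.
  - assert (hin : forall i j, (i < j)%nat -> In (next (prefix i)) (prefix j)).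
    { intros i j. induction j as [|j IH]; intro hij; [lia|].
      simpl. destruct (Nat.eq_dec i j) as [-> | hne]; [left; reflexivity|].
      right. apply IH. lia. }
    intros i j e. destruct (Nat.lt_trichotomy i j) as [hlt | [heq | hgt]]; auto.
    + exfalso. apply (proj2 (hnext (prefix j))). rewrite <- e. apply hin; auto.
    + exfalso. apply (proj2 (hnext (prefix i))). rewrite e. apply hin; auto.
  - intro n. apply (proj1 (hnext (prefix n))).
Qed.

Lemma countable_of_finite_cover {X : Type} (B : nat -> X -> Prop) :
  (forall x, exists m, B m x) ->
  (forall m, exists l : list X, forall x, B m x -> In x l) -> countable_type X.
Proof.
  intros hcov hfin.
  destruct (choice _ hcov) as [piece hpiece].
  destruct (choice _ hfin) as [enum henum].
  assert (hidx : forall x, exists i, nth_error (enum (piece x)) i = Some x).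
  { intro x. apply In_nth_error, henum, hpiece. }
  destruct (choice _ hidx) as [idx hidx'].
  exists (fun x => to_nat (piece x, idx x)).
  intros x y e. apply to_nat_inj in e. injection e as e1 e2.
  pose proof (hidx' x) as hx. pose proof (hidx' y) as hy.
  rewrite e1, e2, hy in hx. injection hx; auto.
Qed.

Lemma uncountable_cover_injective_seq {X : Type} (B : nat -> X -> Prop) :
  ~ countable_type X -> (forall x, exists m, B m x) ->
  exists m (s : nat -> X), (forall i j, s i = s j -> i = j) /\ forall n, B m (s n).
Proof.
  intros hX hcov. apply NNPP. intro hno. apply hX.
  apply (countable_of_finite_cover B hcov). intro m.
  destruct (finite_or_injective_seq (B m)) as [hfin | hinf]; [exact hfin|].
  exfalso. apply hno. exists m. exact hinf.
Qed.

Lemma bounded_extension_of_injective_seq {X : Type} (s : nat -> X) (e : nat -> R) (C : R) :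
  (forall i j, s i = s j -> i = j) -> 0 <= C -> (forall n, Rabs (e n) <= C) ->
  exists f : X -> R, bounded_fun f /\ forall n, f (s n) = e n.
Proof.
  intros hinj hC he.
  exists (fun y => match excluded_middle_informative (exists i, s i = y) with
                   | left h => e (proj1_sig (constructive_indefinite_description _ h))
                   | right _ => 0 end).
  split.
  - exists C. intro y. destruct (excluded_middle_informative _); [apply he|].
    rewrite Rabs_R0. exact hC.
  - intro n. destruct (excluded_middle_informative _) as [h | h].
    + destruct (constructive_indefinite_description _ h) as [i hi]. simpl.
      rewrite (hinj _ _ hi). reflexivity.
    + exfalso. apply h. exists n. reflexivity.
Qed.

Lemma inv_INR_succ_eventually_lt (e : R) : 0 < e ->
  exists N, forall n, (N <= n)%nat -> / (INR n + 1) < e.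
Proof.
  intro he. destruct (archimed_cor1 e he) as [N [hN hN0]]. exists N. intros n hn.
  apply Rle_lt_trans with (/ INR N); [|exact hN].
  apply Rinv_le_contravar; [apply lt_0_INR; exact hN0|].
  apply le_INR in hn. lra.
Qed.

Lemma linear_coef_zero_of_quadratic_nonneg (c A : R) :
  0 <= A -> (forall t, 0 <= 2 * t * c + t * t * A) -> c = 0.
Proof.
  intros hA h. set (t := - c / (A + 1)).
  assert (ht : c = - t * (A + 1)) by (unfold t; field; lra).
  specialize (h t). rewrite ht in h.
  assert (t = 0) by nra. rewrite ht. nra.
Qed.

Definition lincomb {X : Type} (a : R) (f : X -> R) (b : R) (g : X -> R) : X -> R :=
  fun y => a * f y + b * g y.

Lemma fsub_lincomb {X : Type} (f g : X -> R) : fsub f g = lincomb 1 f (-1) g.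
Proof. apply functional_extensionality. intro y. unfold fsub, lincomb. ring. Qed.

(* [e_n] is opposite to the sign of [<S_n, k_n>], so that
   [||S_(n+1)||^2 <= ||S_n||^2 + ||k_n||^2]. *)
Definition greedy_sign {X : Type} (ip : (X -> R) -> (X -> R) -> R) (k : nat -> X -> R)
    (g : X -> R) (n : nat) : R :=
  if Rle_dec 0 (ip g (k n)) then -1 else 1.

Fixpoint greedy_sum {X : Type} (ip : (X -> R) -> (X -> R) -> R) (k : nat -> X -> R)
    (n : nat) : X -> R :=
  match n with
  | O => fun _ => 0
  | S n' => lincomb 1 (greedy_sum ip k n') (greedy_sign ip k (greedy_sum ip k n') n') (k n')
  end.

Definition greedy_signs {X : Type} (ip : (X -> R) -> (X -> R) -> R) (k : nat -> X -> R)
    (n : nat) : R :=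
  greedy_sign ip k (greedy_sum ip k n) n.

Lemma greedy_signs_sqr {X : Type} ip (k : nat -> X -> R) n :
  greedy_signs ip k n * greedy_signs ip k n = 1.
Proof. unfold greedy_signs, greedy_sign. destruct (Rle_dec _ _); ring. Qed.

Lemma greedy_signs_abs {X : Type} ip (k : nat -> X -> R) n : Rabs (greedy_signs ip k n) <= 1.
Proof.
  unfold greedy_signs, greedy_sign.
  destruct (Rle_dec _ _); unfold Rabs; destruct (Rcase_abs _); lra.
Qed.

Section InnerProduct.
Context {X : Type} {H : (X -> R) -> Prop} {ip : (X -> R) -> (X -> R) -> R}
  (hR : is_RKHS X H ip).

Lemma lincomb_in a f b g : H f -> H g -> H (lincomb a f b g).
Proof.
  intros hf hg. apply (rkhs_add _ _ _ hR (fun y => a * f y) (fun y => b * g y));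
    apply (rkhs_scal _ _ _ hR); assumption.
Qed.

Lemma ip_lincomb_l a f b g h : H f -> H g -> H h ->
  ip (lincomb a f b g) h = a * ip f h + b * ip g h.
Proof.
  intros hf hg hh. unfold lincomb.
  rewrite (rkhs_ip_add _ _ _ hR (fun y => a * f y) (fun y => b * g y));
    try (apply (rkhs_scal _ _ _ hR); assumption); [|assumption].
  rewrite (rkhs_ip_scal _ _ _ hR a f h), (rkhs_ip_scal _ _ _ hR b g h); auto.
Qed.

Lemma ip_lincomb_r a f b g h : H f -> H g -> H h ->
  ip h (lincomb a f b g) = a * ip h f + b * ip h g.
Proof.
  intros hf hg hh.
  rewrite (rkhs_ip_sym _ _ _ hR h), ip_lincomb_l; auto using lincomb_in.
  rewrite (rkhs_ip_sym _ _ _ hR f h), (rkhs_ip_sym _ _ _ hR g h); auto.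
Qed.

Lemma ip_lincomb_self a f b g : H f -> H g ->
  ip (lincomb a f b g) (lincomb a f b g)
  = a * a * ip f f + 2 * a * b * ip f g + b * b * ip g g.
Proof.
  intros hf hg. rewrite ip_lincomb_l, !ip_lincomb_r; auto using lincomb_in.
  rewrite (rkhs_ip_sym _ _ _ hR g f); auto. ring.
Qed.

Lemma ip_zero_l g : H g -> ip (fun _ => 0) g = 0.
Proof.
  intro hg.
  replace (fun _ : X => 0) with (fun y : X => 0 * g y)
    by (apply functional_extensionality; intro; ring).
  rewrite (rkhs_ip_scal _ _ _ hR); auto. ring.
Qed.

Lemma ip_zero_r g : H g -> ip g (fun _ => 0) = 0.
Proof.
  intro hg. pose proof (rkhs_zero _ _ _ hR) as h0.
  rewrite (rkhs_ip_sym _ _ _ hR); auto using ip_zero_l.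
Qed.

Lemma ip_norm_lt f eps : H f -> 0 < eps -> (ip_norm ip f < eps <-> ip f f < eps * eps).
Proof.
  intros hf he. unfold ip_norm. pose proof (rkhs_ip_pos _ _ _ hR f hf).
  split; intro h.
  - rewrite <- (sqrt_square eps) in h by lra. apply sqrt_lt_0_alt in h. exact h.
  - rewrite <- (sqrt_square eps) by lra. apply sqrt_lt_1; nra.
Qed.

Lemma two_mul_ip_le a f g : H f -> H g -> 2 * a * ip f g <= a * a * ip f f + ip g g.
Proof.
  intros hf hg.
  pose proof (rkhs_ip_pos _ _ _ hR _ (lincomb_in a f (-1) g hf hg)) as hpos.
  rewrite ip_lincomb_self in hpos; auto. lra.
Qed.

Lemma not_ip_linear_growth f (S : nat -> X -> R) (M : R) :
  0 < M -> H f -> (forall n, H (S n)) -> (forall n, ip (S n) (S n) <= INR n * M) ->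
  ~ (forall n, ip f (S n) = INR n).
Proof.
  intros hM hf hS hSn hfS.
  destruct (INR_unbounded (M * ip f f)) as [n hn].
  pose proof (two_mul_ip_le M f (S n) hf (hS n)) as hcs.
  rewrite hfS in hcs. pose proof (hSn n). nra.
Qed.

Section Kernel.
Variable x : X.

Lemma minimizing_sequence_at g1 : H g1 -> g1 x = 1 ->
  exists (d : R) (u : nat -> X -> R),
    (forall g, H g -> g x = 1 -> d <= ip g g) /\
    forall n, H (u n) /\ u n x = 1 /\ ip (u n) (u n) < d + / (INR n + 1).
Proof.
  intros hg1 hg1x.
  set (E := fun r => exists g, H g /\ g x = 1 /\ r = - ip g g).
  destruct (completeness E) as [L [hub hlub]].
  { exists 0. intros r [g [hg [_ ->]]]. pose proof (rkhs_ip_pos _ _ _ hR g hg). lra. }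
  { exists (- ip g1 g1), g1. auto. }
  assert (hlow : forall g, H g -> g x = 1 -> - L <= ip g g).
  { intros g hg hgx. assert (hE : E (- ip g g)) by (exists g; auto).
    specialize (hub _ hE). lra. }
  assert (happrox : forall n, exists g, H g /\ g x = 1 /\ ip g g < - L + / (INR n + 1)).
  { intro n. apply NNPP. intro hno.
    assert (hpos : 0 < / (INR n + 1)) by (apply Rinv_0_lt_compat; pose proof (pos_INR n); lra).
    enough (L <= L - / (INR n + 1)) by lra.
    apply hlub. intros r [g [hg [hgx ->]]].
    destruct (Rlt_or_le (ip g g) (- L + / (INR n + 1))) as [hlt | hle]; [|lra].
    exfalso. apply hno. exists g. auto. }
  destruct (choice _ happrox) as [u hu]. exists (- L), u. auto.
Qed.

Lemma minimizing_sequence_cauchy d (u : nat -> X -> R) :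
  (forall g, H g -> g x = 1 -> d <= ip g g) ->
  (forall n, H (u n) /\ u n x = 1 /\ ip (u n) (u n) < d + / (INR n + 1)) ->
  forall eps, 0 < eps -> exists N, forall n m, (N <= n)%nat -> (N <= m)%nat ->
    ip_norm ip (fsub (u n) (u m)) < eps.
Proof.
  intros hlow hu eps heps.
  destruct (inv_INR_succ_eventually_lt (eps * eps / 4)) as [N hN]; [nra|].
  exists N. intros n m hn hm.
  destruct (hu n) as [hun [hunx hunq]], (hu m) as [hum [humx humq]].
  rewrite fsub_lincomb, ip_norm_lt, ip_lincomb_self; auto using lincomb_in.
  (* parallelogram law, with the midpoint of [u n] and [u m] still on the hyperplane *)
  assert (hmid := hlow _ (lincomb_in (1/2) (u n) (1/2) (u m) hun hum)).
  rewrite ip_lincomb_self in hmid by auto.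
  specialize (hmid ltac:(unfold lincomb; rewrite hunx, humx; field)).
  pose proof (hN n hn). pose proof (hN m hm). lra.
Qed.

Lemma eval_norm_limit (u : nat -> X -> R) g c : H g -> (forall n, H (u n)) ->
  (forall eps, 0 < eps -> exists N, forall n, (N <= n)%nat -> ip_norm ip (fsub (u n) g) < eps) ->
  (forall n, u n x = c) -> g x = c.
Proof.
  intros hg hu hconv hux. apply NNPP. intro hne.
  assert (hpos : 0 < Rabs (g x - c)) by (apply Rabs_pos_lt; lra).
  destruct (rkhs_eval_cont _ _ _ hR x g hg _ hpos) as [delta [hdelta hclose]].
  destruct (hconv delta hdelta) as [N hN].
  specialize (hclose (u N) (hu N) (hN N (le_n N))).
  rewrite hux, Rabs_minus_sym in hclose. lra.
Qed.

Lemma min_norm_element_at g1 : H g1 -> g1 x = 1 ->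
  exists g0, H g0 /\ g0 x = 1 /\ forall g, H g -> g x = 1 -> ip g0 g0 <= ip g g.
Proof.
  intros hg1 hg1x.
  destruct (minimizing_sequence_at g1 hg1 hg1x) as [d [u [hlow hu]]].
  destruct (rkhs_complete _ _ _ hR u (fun n => proj1 (hu n))) as [g0 [hg0 hconv]].
  { exact (minimizing_sequence_cauchy d u hlow hu). }
  assert (hg0x : g0 x = 1).
  { apply (eval_norm_limit u g0 1 hg0 (fun n => proj1 (hu n)) hconv).
    intro n. apply (hu n). }
  exists g0. split; [exact hg0|]. split; [exact hg0x|].
  enough (ip g0 g0 <= d) by (intros g hg hgx; specialize (hlow g hg hgx); lra).
  apply Rnot_lt_le. intro hlt. set (eta := ip g0 g0 - d).
  destruct (inv_INR_succ_eventually_lt (eta / 4)) as [N1 hN1]; [unfold eta; lra|].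
  destruct (hconv (sqrt (eta / 4))) as [N2 hN2]; [apply sqrt_lt_R0; unfold eta; lra|].
  specialize (hN1 (N1 + N2)%nat ltac:(lia)). specialize (hN2 (N1 + N2)%nat ltac:(lia)).
  destruct (hu (N1 + N2)%nat) as [hun [hunx hunq]].
  rewrite fsub_lincomb, ip_norm_lt, sqrt_sqrt, ip_lincomb_self in hN2;
    auto using lincomb_in; try (unfold eta; lra); [|apply sqrt_lt_R0; unfold eta; lra].
  (* [2 u_n - g0] lies on the hyperplane and has norm close to [2 d - ||g0||^2 < d] *)
  assert (hrefl := hlow _ (lincomb_in 2 (u (N1 + N2)%nat) (-1) g0 hun hg0)).
  rewrite ip_lincomb_self in hrefl by auto.
  specialize (hrefl ltac:(unfold lincomb; rewrite hunx, hg0x; ring)).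
  unfold eta in *. lra.
Qed.

Lemma min_norm_orthogonal g0 : H g0 -> g0 x = 1 ->
  (forall g, H g -> g x = 1 -> ip g0 g0 <= ip g g) ->
  forall h, H h -> h x = 0 -> ip g0 h = 0.
Proof.
  intros hg0 hg0x hmin h hh hhx.
  apply (linear_coef_zero_of_quadratic_nonneg _ (ip h h) (rkhs_ip_pos _ _ _ hR h hh)).
  intro t. assert (hperturb := hmin _ (lincomb_in 1 g0 t h hg0 hh)).
  rewrite ip_lincomb_self in hperturb by auto.
  specialize (hperturb ltac:(unfold lincomb; rewrite hg0x, hhx; ring)). lra.
Qed.

Lemma reproducing_kernel_at : exists k, H k /\ forall f, H f -> ip f k = f x.
Proof.
  destruct (classic (exists g, H g /\ g x <> 0)) as [[g [hg hgx]] | hvanish].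
  2: { exists (fun _ => 0). split; [exact (rkhs_zero _ _ _ hR)|].
       intros f hf. rewrite ip_zero_r by exact hf.
       apply NNPP. intro hfx. apply hvanish. exists f. auto. }
  destruct (min_norm_element_at (lincomb (/ g x) g 0 g)) as [g0 [hg0 [hg0x hmin]]].
  { apply lincomb_in; assumption. }
  { unfold lincomb. field. exact hgx. }
  assert (hpos : 0 < ip g0 g0).
  { destruct (Rle_lt_or_eq_dec _ _ (rkhs_ip_pos _ _ _ hR g0 hg0)) as [hlt | heq]; [exact hlt|].
    symmetry in heq. apply (rkhs_ip_def _ _ _ hR g0 hg0) in heq.
    rewrite heq in hg0x. lra. }
  exists (lincomb (/ ip g0 g0) g0 0 g0). split; [apply lincomb_in; assumption|].
  intros f hf.
  (* [f - f(x) g0] vanishes at [x], hence is orthogonal to [g0] *)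
  assert (horth := min_norm_orthogonal g0 hg0 hg0x hmin _ (lincomb_in 1 f (- f x) g0 hf hg0)).
  rewrite ip_lincomb_r, (rkhs_ip_sym _ _ _ hR g0 f) in horth by auto.
  specialize (horth ltac:(unfold lincomb; rewrite hg0x; ring)).
  rewrite ip_lincomb_r by auto.
  replace (ip f g0) with (f x * ip g0 g0) by lra. field. lra.
Qed.

End Kernel.

Section GreedySum.
Context {k : nat -> X -> R} (hk : forall n, H (k n)).

Lemma greedy_sum_in n : H (greedy_sum ip k n).
Proof.
  induction n as [|n IH]; simpl; [exact (rkhs_zero _ _ _ hR)|].
  apply lincomb_in; auto.
Qed.

Lemma greedy_sum_norm_le (M : R) : (forall n, ip (k n) (k n) <= M) ->
  forall n, ip (greedy_sum ip k n) (greedy_sum ip k n) <= INR n * M.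
Proof.
  intros hkM n. induction n as [|n IH].
  { simpl. rewrite ip_zero_l by exact (rkhs_zero _ _ _ hR). lra. }
  simpl greedy_sum. rewrite ip_lincomb_self by auto using greedy_sum_in. rewrite S_INR.
  assert (hangle : greedy_signs ip k n * ip (greedy_sum ip k n) (k n) <= 0).
  { unfold greedy_signs, greedy_sign. destruct (Rle_dec _ _); lra. }
  fold (greedy_signs ip k n). rewrite greedy_signs_sqr. pose proof (hkM n). lra.
Qed.

Lemma ip_greedy_sum f : H f -> (forall n, ip f (k n) = greedy_signs ip k n) ->
  forall n, ip f (greedy_sum ip k n) = INR n.
Proof.
  intros hf hfk n. induction n as [|n IH].
  { simpl. apply ip_zero_r. exact hf. }
  simpl greedy_sum. rewrite ip_lincomb_r by auto using greedy_sum_in.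
  fold (greedy_signs ip k n). rewrite IH, S_INR, hfk, greedy_signs_sqr. ring.
Qed.

End GreedySum.

End InnerProduct.

Theorem theorem2 (X : Type) (hX : ~ countable_type X) :
  ~ (exists (H : (X -> R) -> Prop) (ip : (X -> R) -> (X -> R) -> R),
       is_RKHS X H ip /\ (forall f : X -> R, bounded_fun f -> H f)).
Proof.
  intros [H [ip [hR hlinf]]].
  destruct (choice _ (reproducing_kernel_at hR)) as [K hK].
  destruct (uncountable_cover_injective_seq (fun m x => ip (K x) (K x) <= INR m) hX)
    as [m [s [hinj hs]]].
  { intro x. destruct (INR_unbounded (ip (K x) (K x))) as [m hm]. exists m. lra. }
  set (k := fun n => K (s n)).
  assert (hk : forall n, H (k n)) by (intro n; apply hK).
  destruct (bounded_extension_of_injective_seq s (greedy_signs ip k) 1 hinj)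
    as [f [hfb hfs]]; [lra | apply greedy_signs_abs|].
  assert (hf : H f) by (apply hlinf; exact hfb).
  apply (not_ip_linear_growth hR f (greedy_sum ip k) (INR m + 1)).
  - pose proof (pos_INR m). lra.
  - exact hf.
  - exact (greedy_sum_in hR hk).
  - apply (greedy_sum_norm_le hR hk). intro n. pose proof (hs n). unfold k. lra.
  - apply (ip_greedy_sum hR hk f hf). intro n. unfold k.
    rewrite (proj2 (hK (s n)) f hf). apply hfs.
Qed.
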